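(* Let $(q_k)_{k\ge1}$ be a sequence of integers with $q_k \ge 2$ for every $k \in \mathbb{N}$ and $\liminf_{k\to\infty} q_k/k > 3$. Then there exists a constant $C$ such that the following holds. For every $n \in \mathbb{N}$ and every collection $\mathcal{A}$ of hyperplanes in $Q := [q_1]\times\cdots\times[q_n]$ whose union is $Q$, either two distinct hyperplanes of $\mathcal{A}$ are parallel, or there exists $A \in \mathcal{A}$ with $F(A) \subseteq [C]$.
   Context: $[m] = \{1,\dots,m\}$. For finite sets $S_1,\dots,S_n$, a hyperplane in $Q = S_1\times\cdots\times S_n$ is a set $A = A_1\times\cdots\times A_n$ where each $A_k$ is either $S_k$ or a singleton subset of $S_k$. Its set of fixed coordinates is $F(A) = \{k : A_k \text{ is a singleton}\}$. Two hyperplanes $A, A'$ are parallel if $F(A) = F(A')$. *)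

From mathcomp Require Import all_boot all_order all_algebra.
Set Implicit Arguments. Unset Strict Implicit. Unset Printing Implicit Defensive.
Import Order.TTheory GRing.Theory Num.Theory.

(* The sequence (q_k)_{k>=1} is q : nat -> nat (q 0 is irrelevant).
   Coordinate k : 'I_n of the box corresponds to the paper's coordinate k+1,
   so S_{k+1} = [q (k+1)] = {1, ..., q (k+1)}. *)

Definition in_box (q : nat -> nat) (n : nat) (x : 'I_n -> nat) : Prop :=
  forall k : 'I_n, 1 <= x k <= q k.+1.

(* A hyperplane is described by, for each coordinate, either None (A_k = S_k)
   or Some a (A_k = {a}, with a in S_k). *)
Definition hyperplane (q : nat -> nat) (n : nat) (H : 'I_n -> option nat) : Prop :=
  forall (k : 'I_n) (a : nat), H k = Some a -> 1 <= a <= q k.+1.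

Definition in_hyp (n : nat) (H : 'I_n -> option nat) (x : 'I_n -> nat) : Prop :=
  forall (k : 'I_n) (a : nat), H k = Some a -> x k = a.

Definition fixed (n : nat) (H : 'I_n -> option nat) (k : 'I_n) : bool :=
  H k != None.

Definition parallel (n : nat) (H1 H2 : 'I_n -> option nat) : Prop :=
  forall k : 'I_n, fixed H1 k = fixed H2 k.

Definition fixed_within (n : nat) (H : 'I_n -> option nat) (C : nat) : Prop :=
  forall k : 'I_n, fixed H k -> k.+1 <= C.

(* Suppose no two hyperplanes of the cover are parallel, so that a hyperplane
   is determined by its set S of fixed coordinates, and that every such S has an
   element beyond C.  We choose the coordinates of an uncovered point one at a
   time, keeping below 1 a potential: the sum, over pairs (S, S') with a common
   maximum k >= m whose hyperplanes agree with the coordinates x_j, j < m,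
   chosen so far, of (theta q_(k+1))^-2 times c_j = ((1 - theta) q_(j+1))^-1
   for each undecided j < k fixed in S or in S'.  The pairs with k = m
   contribute (N / (theta q_(m+1)))^2, where N counts the hyperplanes with
   maximum m still agreeing with x, so N < theta q_(m+1) and at least
   (1 - theta) q_(m+1) = 1 / c_m values of x_m avoid all of them; averaging over
   these values does not increase the rest of the potential.  Initially the
   potential is at most the tail from C of the series of
   prod_(j < k) (1 + 3 c_j) / (theta q_(k+1))^2, which converges because
   q_k >= r k with (1 - theta) r > 3 makes the product grow like k^b, b < 1. *)

From mathcomp Require Import all_boot all_order all_algebra.
From mathcomp Require Import ring lra.
From Stdlib Require Import Classical ClassicalEpsilon.
Set Implicit Arguments. Unset Strict Implicit. Unset Printing Implicit Defensive.
Import Order.TTheory GRing.Theory Num.Theory.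
Local Open Scope ring_scope.

Lemma bounded_sums_small_tail (R : archiRealFieldType) (u : nat -> R) (a : nat) (B : R) :
  (forall b, \sum_(a <= i < b) u i <= B) ->
  exists C, forall n, \sum_(C <= i < n) u i < 1.
Proof.
move=> bounded; apply: NNPP => no_tail.
have block C : exists2 n, (C <= n)%N & 1 <= \sum_(C <= i < n) u i.
  apply: NNPP => no_block; apply: no_tail; exists C => n.
  rewrite ltNge; apply/negP => ge1; apply: no_block; exists n => //.
  by rewrite leqNgt; apply/negP => /ltnW nC; move: ge1; rewrite big_geq // ler10.
have grow m : exists2 b, (a <= b)%N & m%:R <= \sum_(a <= i < b) u i.
  elim: m => [|m [b ab IH]]; first by exists a; rewrite ?big_geq.
  have [b' bb' ge1] := block b.
  exists b'; first exact: leq_trans bb'.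
  by rewrite (big_cat_nat ab bb') -natr1 lerD.
have B_ge0 : 0 <= B by apply: le_trans (bounded a); rewrite big_geq.
have [b _ hb] := grow (Num.bound B).
have := archi_boundP B_ge0; have := bounded b; lra.
Qed.

Lemma inv_sq_le_telescoped (R : realFieldType) (g b c s x : R) :
  0 <= g -> b < 1 -> 1 <= s -> 0 <= c -> c * (s + 1) <= b -> x <= g / (s + 1) ^+ 2 ->
  x <= g / (1 - b) * (s^-1 - (1 + c) / (s + 1)).
Proof.
move=> g0 b1 s1 c0 cb xg.
have s0 : 0 < s by lra.
have s10 : 0 < s + 1 by lra.
have -> : g / (1 - b) * (s^-1 - (1 + c) / (s + 1))
          = g / (s * (s + 1)) * ((1 - c * s) / (1 - b)).
  by field; rewrite !gt_eqF ?subr_gt0.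
apply: (le_trans xg); apply: le_trans (ler_peMr _ _).
- rewrite ler_wpM2l // lef_pV2 ?posrE ?exprn_gt0 ?mulr_gt0 //; nra.
- by rewrite divr_ge0 // mulr_ge0 // ltW.
- by rewrite ler_pdivlMr ?subr_gt0 // mul1r; nra.
Qed.

Definition hit (R : realFieldType) (q : nat -> nat) (th : R) (j : nat) : R :=
  ((1 - th) * (q j.+1)%:R)^-1.

Definition growth (R : realFieldType) (q : nat -> nat) (th : R) (i : nat) : R :=
  \prod_(j < i) (1 + 3 * hit q th j).

Definition tail_term (R : realFieldType) (q : nat -> nat) (th : R) (i : nat) : R :=
  growth q th i / (th * (q i.+1)%:R) ^+ 2.

Lemma hit_ge0 (R : realFieldType) q (th : R) j : th <= 1 -> 0 <= hit q th j.
Proof. by move=> th1; rewrite /hit invr_ge0 mulr_ge0 ?subr_ge0. Qed.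

Lemma growth_ge0 (R : realFieldType) q (th : R) i : th <= 1 -> 0 <= growth q th i.
Proof.
move=> th1; apply: prodr_ge0 => j _.
by rewrite addr_ge0 ?mulr_ge0 ?hit_ge0.
Qed.

Lemma tail_term_small_tail (R : archiRealFieldType) (q : nat -> nat) (r th : R) (K : nat) :
  0 < th -> th < 1 -> 3 < (1 - th) * r ->
  (forall k, (K <= k)%N -> r * k%:R <= (q k)%:R) ->
  exists C, forall n, \sum_(C <= i < n) tail_term q th i < 1.
Proof.
move=> th0 th1 hr hq.
have r0 : 0 < r by nra.
pose b := 3 / ((1 - th) * r).
have b0 : 0 <= b by rewrite divr_ge0 // mulr_ge0; lra.
have b1 : b < 1 by rewrite ltr_pdivrMr ?mul1r // mulr_gt0 // subr_gt0.
pose lam := (th * r) ^- 2 / (1 - b).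
have lam_ge0 : 0 <= lam by rewrite divr_ge0 ?invr_ge0 ?sqr_ge0 // subr_ge0 ltW.
(* [u] decreases because [growth q th j] grows only like [j ^ b], with [b < 1]. *)
pose u j := lam * (growth q th j / j%:R).
have u_ge0 j : 0 <= u j by rewrite mulr_ge0 // divr_ge0 ?growth_ge0 ?ler0n // ltW.
have u_step i : (K < i)%N -> tail_term q th i <= u i - u i.+1.
  move=> Ki; have := hq i.+1 (leqW (ltnW Ki)).
  rewrite /u /tail_term /growth big_ord_recr /= -natr1.
  set s := i%:R; set Q := (q i.+1)%:R; set G := \prod_(j < i) _; set h := hit q th i.
  move=> q_ge.
  have s1 : 1 <= s by rewrite ler1n (leq_ltn_trans _ Ki).
  have Q0 : 0 < Q by apply: lt_le_trans q_ge; rewrite mulr_gt0 //; lra.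
  have rho0 : 0 <= r * (s + 1) / Q by rewrite divr_ge0 ?mulr_ge0 //; lra.
  have rho1 : r * (s + 1) / Q <= 1 by rewrite ler_pdivrMr ?mul1r.
  have -> : lam * (G / s) - lam * (G * (1 + 3 * h) / (s + 1))
            = G * (lam * (s^-1 - (1 + 3 * h) / (s + 1))) by ring.
  apply: ler_wpM2l; first exact: growth_ge0 (ltW th1).
  apply: inv_sq_le_telescoped => //.
  - by rewrite invr_ge0 sqr_ge0.
  - by rewrite mulr_ge0 ?hit_ge0 ?ltW.
  - have -> : 3 * h * (s + 1) = b * (r * (s + 1) / Q).
      by rewrite /h /hit /b; field; rewrite !gt_eqF ?subr_gt0.
    by rewrite ler_piMr.
  - have -> : (th * Q) ^- 2 = (th * r) ^- 2 / (s + 1) ^+ 2 * (r * (s + 1) / Q) ^+ 2.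
      by field; rewrite !gt_eqF //; lra.
    by rewrite ler_piMr ?expr_le1 // divr_ge0 ?invr_ge0 ?sqr_ge0.
apply: (@bounded_sums_small_tail _ _ K.+1 (u K.+1)) => c.
case: (leqP K.+1 c) => Kc; last by rewrite big_geq ?u_ge0 // ltnW.
apply: le_trans (_ : \sum_(K.+1 <= i < c) (u i - u i.+1) <= _).
  by apply: ler_sum_nat => i /andP [Ki _]; apply: u_step.
have := telescope_sumr (fun i => - u i) Kc.
under eq_bigr do rewrite opprK addrC.
by move=> ->; have := u_ge0 c; lra.
Qed.

Definition is_max (n : nat) (S : {set 'I_n}) (k : 'I_n) : bool :=
  (k \in S) && [forall j in S, (j <= k)%N].

Lemma is_maxP (n : nat) (S : {set 'I_n}) (k : 'I_n) :
  reflect (k \in S /\ forall j : 'I_n, (k < j)%N -> j \notin S) (is_max S k).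
Proof.
apply: (iffP andP) => [[kS /forall_inP Sk]|[kS Sk]]; split=> //.
  by move=> j; apply: contraTN => /Sk; rewrite leqNgt.
by apply/forall_inP => j; apply: contraTT; rewrite -ltnNge; apply: Sk.
Qed.

Lemma sum_max_pairs (R : comPzRingType) (n : nat) (k : 'I_n) (c : 'I_n -> R) :
  \sum_(S | is_max S k) \sum_(S' | is_max S' k)
     \prod_(j : 'I_n | (j < k)%N) (if (j \in S) || (j \in S') then c j else 1)
  = \prod_(j : 'I_n | (j < k)%N) (1 + 3 * c j).
Proof.
(* A pair (S, S') is encoded by f : 'I_n -> bool * bool with
   f j = (j \in S, j \in S'); the sum over pairs then expands the product over j
   of the sums over the values [D j] allowed for [f j]. *)
pose D (j : 'I_n) (b : bool * bool) :=
  if (j < k)%N then true else if (k < j)%N then b == (false, false) else b == (true, true).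
pose w (j : 'I_n) (b : bool * bool) := if (j < k)%N && (b.1 || b.2) then c j else 1.
have -> : \prod_(j : 'I_n | (j < k)%N) (1 + 3 * c j) = \prod_j \sum_(b | D j b) w j b.
  rewrite big_mkcond /=; apply: eq_bigr => j _; rewrite /D /w.
  case: ltnP => /= jk; last by case: ltnP => _; rewrite big_pred1_eq.
  rewrite -(pair_bigA _ (fun b1 b2 => if b1 || b2 then c j else 1)) /= !big_bool /=.
  ring.
rewrite bigA_distr_big_dep /= pair_big_dep /=.
pose sets (f : {ffun 'I_n -> bool * bool}) := ([set j | (f j).1], [set j | (f j).2]).
rewrite (reindex sets) /=; last first.
  apply: onW_bij.
  exists (fun p : {set 'I_n} * {set 'I_n} => [ffun j => (j \in p.1, j \in p.2)]).
    by move=> f; apply/ffunP => j; rewrite ffunE !inE; case: (f j).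
  by move=> [S S']; congr pair; apply/setP => j; rewrite !inE ffunE.
apply: eq_big => [f|f _]; last first.
  by rewrite big_mkcond /=; apply: eq_bigr => j _; rewrite /w !inE; case: ltnP.
apply/andP/familyP => [[/is_maxP [k1 a1] /is_maxP [k2 a2]] j | fD].
  rewrite !inE in k1 k2; rewrite unfold_in /D.
  case: ltngtP => [//|kj|/val_inj ->]; last by case: (f k) k1 k2 => [[] []].
  by move: (a1 j kj) (a2 j kj); rewrite !inE; case: (f j) => [[] []].
have := fD k; rewrite unfold_in /D ltnn => /eqP fk.
split; apply/is_maxP; split; rewrite ?inE ?fk // => j kj;
  by have := fD j; rewrite unfold_in /D ltnNge (ltnW kj) kj inE => /eqP ->.
Qed.

Lemma prod_nat_bool (R : comPzSemiRingType) (I : finType) (P : pred I) (b : I -> bool) :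
  \prod_(i | P i) (b i)%:R = [forall i, P i ==> b i]%:R :> R.
Proof.
have [Pb|/forallPn [i]] := boolP [forall i, P i ==> b i].
  by rewrite big1 // => i /(implyP (forallP Pb i)) ->.
by rewrite negb_imply => /andP [Pi /negbTE bi]; rewrite (bigD1 i) //= bi mul0r.
Qed.

Lemma exists_le_mean (R : realDomainType) (I : finType) (A : {set I}) (f : I -> R) (c : R) :
  A != set0 -> \sum_(i in A) f i <= #|A|%:R * c -> exists2 i, i \in A & f i <= c.
Proof.
move=> /set0Pn [i0 Ai0] sum_le; apply: NNPP => no_i.
suff : #|A|%:R * c < \sum_(i in A) f i by rewrite ltNge sum_le.
rewrite mulr_natl -sumr_const; apply: ltr_sum.
  by apply/hasP; exists i0; rewrite ?mem_index_enum.
by move=> i Ai; rewrite ltNge; apply/negP => fi; apply: no_i; exists i.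
Qed.

Lemma sum_ord_eq_le1 (R : numDomainType) (N : nat) (F : {set 'I_N}) (a : nat) :
  \sum_(t in F) ((t == a :> nat)%:R : R) <= 1.
Proof.
case: (pickP (fun t : 'I_N => (t \in F) && (t == a :> nat))) => [t0 /andP [Ft0 /eqP t0a] | none].
  rewrite (bigD1 t0) //= t0a eqxx big1 ?addr0 // => t /andP [_ tt0].
  by case: eqP => // ta; case/eqP: tt0; apply: ord_inj; rewrite ta t0a.
by rewrite big1 // => t Ft; move: (none t); rewrite Ft /=; case: (_ == a).
Qed.

Section Potential.
Variables (R : realFieldType) (q : nat -> nat) (th : R) (n : nat).
Variable A : ('I_n -> option nat) -> Prop.
Hypothesis q_gt0 : forall j, (0 < q j.+1)%N.
Hypothesis th_gt0 : 0 < th.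
Hypothesis th_lt1 : th < 1.
Hypothesis A_nonparallel : forall H1 H2, A H1 -> A H2 -> parallel H1 H2 -> H1 = H2.

Definition hyp_at (S : {set 'I_n}) : option ('I_n -> option nat) :=
  match excluded_middle_informative (exists H, A H /\ forall j, fixed H j = (j \in S)) with
  | left e => Some (proj1_sig (constructive_indefinite_description _ e))
  | right _ => None
  end.

Lemma hyp_atP S H : hyp_at S = Some H -> A H /\ forall j, fixed H j = (j \in S).
Proof.
rewrite /hyp_at; case: excluded_middle_informative => // e [<-].
by case: constructive_indefinite_description.
Qed.

Lemma hyp_at_fixed H : A H -> hyp_at [set j | fixed H j] = Some H.
Proof.
move=> AH; rewrite /hyp_at; case: excluded_middle_informative => [e|]; last first.
  by case; exists H; split => // j; rewrite inE.
case: constructive_indefinite_description => H' [AH' fixedH'] /=.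
by congr Some; apply: A_nonparallel => // j; rewrite fixedH' inE.
Qed.

Definition agree (H : 'I_n -> option nat) (x : 'I_n -> nat) (j : 'I_n) : bool :=
  if H j is Some a then x j == a else true.

Definition consistent (m : nat) (x : 'I_n -> nat) (S : {set 'I_n}) : bool :=
  if hyp_at S is Some H then [forall j : 'I_n, (j < m)%N ==> agree H x j] else false.

Definition scale (k : 'I_n) : R := (th * (q k.+1)%:R) ^+ 2.

(* Coordinates below [m] are decided by [x]; an undecided coordinate [j] that
   one of the two hyperplanes fixes is matched by a free value of [x j] with
   probability at most [hit q th j]. *)
Definition pair_factor m x (H H' : 'I_n -> option nat) (j : 'I_n) : R :=
  if (j < m)%N then (agree H x j && agree H' x j)%:R
  else if fixed H j || fixed H' j then hit q th j else 1.

Definition pair_weight m x (k : 'I_n) (S S' : {set 'I_n}) : R :=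
  if (hyp_at S, hyp_at S') is (Some H, Some H')
  then (\prod_(j : 'I_n | (j < k)%N) pair_factor m x H H' j) / scale k
  else 0.

Definition layer m x (k : 'I_n) : R :=
  \sum_(S | is_max S k) \sum_(S' | is_max S' k) pair_weight m x k S S'.

Definition potential m x : R := \sum_(k : 'I_n | (m <= k)%N) layer m x k.

Lemma scale_gt0 k : 0 < scale k.
Proof. by rewrite exprn_gt0 // mulr_gt0 // ltr0n. Qed.

Lemma pair_factor_ge0 m x H H' j : 0 <= pair_factor m x H H' j.
Proof.
rewrite /pair_factor; case: ifP => _; first by rewrite ler0n.
by case: ifP => _; rewrite ?hit_ge0 ?ltW.
Qed.

Lemma pair_weight_ge0 m x k S S' : 0 <= pair_weight m x k S S'.
Proof.
rewrite /pair_weight; case: (hyp_at S) => // H; case: (hyp_at S') => // H'.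
by rewrite divr_ge0 ?(ltW (scale_gt0 k)) // prodr_ge0 // => j _; apply: pair_factor_ge0.
Qed.

Lemma layer_ge0 m x k : 0 <= layer m x k.
Proof. by do 2![apply: sumr_ge0 => ? _]; apply: pair_weight_ge0. Qed.

Lemma potential_split m x (mo : 'I_n) : mo = m :> nat ->
  potential m x = layer m x mo + \sum_(k : 'I_n | (m < k)%N) layer m x k.
Proof.
move=> mo_m; rewrite /potential (bigD1 mo) /= ?mo_m //; congr (_ + _).
by apply: eq_bigl => k; rewrite ltn_neqAle -mo_m andbC eq_sym.
Qed.

Lemma layer_current m x (mo : 'I_n) : mo = m :> nat ->
  layer m x mo = #|[set S | is_max S mo && consistent m x S]|%:R ^+ 2 / scale mo.
Proof.
move=> mo_m.
have -> : #|[set S | is_max S mo && consistent m x S]|%:R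
          = \sum_(S | is_max S mo) (consistent m x S)%:R :> R.
  by rewrite -sum1dep_card natr_sum big_mkcondr; apply: eq_bigr => S _; case: consistent.
rewrite expr2 -mulrA mulr_suml; apply: eq_bigr => S _.
rewrite mulr_suml mulr_sumr; apply: eq_bigr => S' _.
rewrite /pair_weight /consistent.
case: (hyp_at S) => [H|]; last by rewrite !mul0r.
case: (hyp_at S') => [H'|]; last by rewrite mul0r mulr0.
rewrite mulrA -!prod_nat_bool -big_split /=; congr (_ / _).
apply: eq_big => [j|j jm]; first by rewrite mo_m.
by rewrite /pair_factor -mo_m jm -natrM mulnb.
Qed.

Section Step.
Variables (m : nat) (x : 'I_n -> nat) (mo : 'I_n).
Hypothesis mo_m : mo = m :> nat.

Definition set_coord (t : nat) (j : 'I_n) : nat := if j == mo then t else x j.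

Definition fixed_value (S : {set 'I_n}) : nat :=
  if hyp_at S is Some H then odflt 0%N (H mo) else 0%N.

Definition free_values : {set 'I_(q mo.+1).+1} :=
  [set t : 'I_(q mo.+1).+1 | (0 < t)%N &
     [forall S, is_max S mo && consistent m x S ==> (fixed_value S != t)]].

Lemma card_free_values :
  (q mo.+1 <= #|free_values| + #|[set S | is_max S mo && consistent m x S]|)%N.
Proof.
set Cons := [set S | _].
apply: (@leq_trans #|[set~ (ord0 : 'I_(q mo.+1).+1)]|); first by rewrite cardsC1 card_ord.
apply: leq_trans (leq_add (leqnn _) (leq_imset_card (fun S => inord (fixed_value S)) Cons)).
apply: leq_trans (leq_card_setU _ _); apply/subset_leq_card/subsetP => t.
rewrite !inE -lt0n => t_gt0.
have [_|/forallPn [S]] :=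
  boolP [forall S, is_max S mo && consistent m x S ==> (fixed_value S != t)].
  by rewrite t_gt0.
rewrite negb_imply negbK => /andP [SC /eqP ft].
by apply/orP; right; apply/imsetP; exists S; rewrite ?inE // ft inord_val.
Qed.

Lemma consistent_set_coord t S : consistent m.+1 (set_coord t) S -> consistent m x S.
Proof.
rewrite /consistent; case: (hyp_at S) => // H /forallP agreeH.
apply/forallP => j; apply/implyP => jm.
have jmo : j != mo by rewrite -(inj_eq val_inj) /= mo_m neq_ltn jm.
by have := implyP (agreeH j) (leqW jm); rewrite /agree /set_coord (negbTE jmo).
Qed.

Lemma free_value_breaks t S :
  t \in free_values -> is_max S mo -> ~~ consistent m.+1 (set_coord t) S.
Proof.
rewrite inE => /andP [_ /forallP free] Smax; apply/negP => cons.
move: (free S); rewrite Smax (consistent_set_coord cons) /=.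
move: cons; rewrite /consistent /fixed_value; case hS: (hyp_at S) => [H|] //.
have [_ fixedH] := hyp_atP hS.
have : fixed H mo by rewrite fixedH; case/andP: Smax.
have mo_lt : (mo < m.+1)%N by rewrite mo_m.
move=> /[swap] /forallP /(_ mo); rewrite mo_lt /agree /set_coord eqxx /fixed.
by case: (H mo) => // a /eqP -> _ /=; rewrite eqxx.
Qed.

Lemma pair_weight_average (k : 'I_n) S S' :
  1 <= #|free_values|%:R * hit q th mo -> (m < k)%N ->
  \sum_(t in free_values) pair_weight m.+1 (set_coord t) k S S'
    <= #|free_values|%:R * pair_weight m x k S S'.
Proof.
move=> free_hit mk; have mok : (mo < k)%N by rewrite mo_m.
rewrite /pair_weight; case: (hyp_at S) => [H|]; last by rewrite big1 ?mulr0.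
case: (hyp_at S') => [H'|]; last by rewrite big1 ?mulr0.
have other (t : nat) (j : 'I_n) : (j < k)%N && (j != mo) ->
    pair_factor m.+1 (set_coord t) H H' j = pair_factor m x H H' j.
  case/andP=> _ jmo; rewrite /pair_factor /agree /set_coord (negbTE jmo) ltnS leq_eqVlt.
  by have -> : (j == m :> nat) = false by apply/negbTE; rewrite -mo_m.
under eq_bigr => t _ do rewrite (bigD1 mo mok) /= (eq_bigr _ (other t)).
rewrite (bigD1 mo mok) /= -!mulr_suml !mulrA.
apply: ler_wpM2r; first by rewrite invr_ge0 ltW ?scale_gt0.
apply: ler_wpM2r; first by apply: prodr_ge0 => j _; apply: pair_factor_ge0.
have mo_lt : (mo < m.+1)%N by rewrite mo_m.
have mo_nlt : (mo < m)%N = false by rewrite mo_m ltnn.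
rewrite /pair_factor mo_lt mo_nlt /agree /set_coord eqxx /fixed.
case: (H mo) => [a|] /=.
  apply: le_trans free_hit; apply: le_trans (sum_ord_eq_le1 R _ a).
  by apply: ler_sum => t _; rewrite ler_nat; case: (_ == a); rewrite /= ?leq_b1.
case: (H' mo) => [a|] /=; last by rewrite sumr_const mulr1.
by apply: le_trans free_hit; apply: sum_ord_eq_le1.
Qed.

Lemma potential_step : potential m x < 1 ->
  exists2 t, t \in free_values & potential m.+1 (set_coord t) <= potential m x.
Proof.
move=> pot_lt1.
set rest := \sum_(k : 'I_n | (m < k)%N) layer m x k.
have rest_ge0 : 0 <= rest by apply: sumr_ge0 => k _; apply: layer_ge0.
have pot_eq : potential m x = layer m x mo + rest := potential_split x mo_m.
have layer_lt1 : layer m x mo < 1 by rewrite pot_eq in pot_lt1; lra.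
have := card_free_values; set N := #|[set S | _]|; rewrite -(ler_nat R) natrD => card_free.
have N_lt : N%:R < th * (q mo.+1)%:R.
  move: layer_lt1; rewrite (layer_current _ mo_m) ltr_pdivrMr ?scale_gt0 // mul1r /scale.
  by rewrite ltr_pXn2r ?nnegrE ?ler0n // mulr_ge0 ?ler0n ?ltW.
have free_hit : 1 <= #|free_values|%:R * hit q th mo.
  rewrite /hit ler_pdivlMr ?mulr_gt0 ?subr_gt0 ?ltr0n //.
  by rewrite mul1r mulrBl mul1r; lra.
have free_ne0 : free_values != set0.
  by apply: contraTneq free_hit => ->; rewrite cards0 mul0r ler10.
have [t t_free pot_t] : exists2 t, t \in free_values & potential m.+1 (set_coord t) <= rest.
  apply: exists_le_mean => //; rewrite mulr_sumr exchange_big /=.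
  apply: ler_sum => k mk; rewrite /layer mulr_sumr exchange_big /=.
  apply: ler_sum => S _; rewrite mulr_sumr exchange_big /=.
  by apply: ler_sum => S' _; apply: pair_weight_average.
exists t => //; apply: le_trans pot_t _.
by rewrite pot_eq lerDr layer_ge0.
Qed.

End Step.

Lemma potential_descent x0 : potential 0 x0 < 1 -> forall m, (m <= n)%N -> exists x,
  [/\ potential m x < 1, forall j : 'I_n, (j < m)%N -> (1 <= x j <= q j.+1)%N &
      forall S (k : 'I_n), is_max S k -> (k < m)%N -> ~~ consistent m x S].
Proof.
move=> pot0; elim=> [|m IH] mn; first by exists x0.
have [x [pot box avoid]] := IH (ltnW mn).
pose mo := Ordinal mn; have mo_m : mo = m :> nat by [].
have [t t_free pot_le] := potential_step mo_m pot.
have t_range : (1 <= t <= q mo.+1)%N.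
  by move: t_free; rewrite inE => /andP [-> _]; rewrite -ltnS ltn_ord.
exists (set_coord x mo t); split.
- exact: le_lt_trans pot_le pot.
- move=> j; rewrite ltnS leq_eqVlt /set_coord => /orP [/eqP jm | jm].
    have -> : j = mo by apply: val_inj.
    by rewrite eqxx.
  by rewrite ifN ?box // -(inj_eq val_inj) neq_ltn jm.
- move=> S k Smax; rewrite ltnS leq_eqVlt => /orP [/eqP km | km].
    have ek : k = mo by apply: val_inj.
    by rewrite ek in Smax; apply: free_value_breaks.
  by apply: contra (avoid S k Smax km); apply: consistent_set_coord.
Qed.

Section FarHyperplanes.
Variable C : nat.
Hypothesis far : forall H, A H -> exists2 j : 'I_n, fixed H j & (C <= j)%N.

Lemma layer_near m x (k : 'I_n) : (k < C)%N -> layer m x k = 0.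
Proof.
move=> kC; apply: big1 => S Smax; apply: big1 => S' _.
rewrite /pair_weight; case hS: (hyp_at S) => [H|] //.
have [AH fixedH] := hyp_atP hS; have [j fj Cj] := far AH.
have /is_maxP [_ /(_ j (leq_trans kC Cj))] := Smax.
by rewrite -fixedH fj.
Qed.

Lemma layer0_le_tail x (k : 'I_n) : layer 0 x k <= tail_term q th k.
Proof.
rewrite /tail_term /growth.
rewrite (big_ord_widen n (fun j => 1 + 3 * hit q th j) (ltnW (ltn_ord k))).
rewrite -(sum_max_pairs k (fun j => hit q th j)) mulr_suml /layer.
apply: ler_sum => S _; rewrite mulr_suml; apply: ler_sum => S' _.
have rhs_ge0 : 0 <= (\prod_(j : 'I_n | (j < k)%N)
    (if (j \in S) || (j \in S') then hit q th j else 1)) / (th * (q k.+1)%:R) ^+ 2.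
  rewrite divr_ge0 ?sqr_ge0 // prodr_ge0 // => j _.
  by case: ifP => _; rewrite ?hit_ge0 ?ltW.
rewrite /pair_weight; case hS: (hyp_at S) => [H|] //; case hS': (hyp_at S') => [H'|] //.
have [_ fixedH] := hyp_atP hS; have [_ fixedH'] := hyp_atP hS'.
by under eq_bigr => j _ do rewrite /pair_factor ltn0 fixedH fixedH'.
Qed.

Lemma potential0_le_tail x : potential 0 x <= \sum_(C <= i < n) tail_term q th i.
Proof.
rewrite big_geq_mkord /potential (bigID (fun k : 'I_n => (C <= k)%N)) /=.
rewrite [X in _ + X]big1 ?addr0 => [|k]; last by rewrite -ltnNge; apply: layer_near.
by apply: ler_sum => k _; apply: layer0_le_tail.
Qed.

Lemma uncovered_point :
  \sum_(C <= i < n) tail_term q th i < 1 ->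
  exists2 x, in_box q x & forall H, A H -> ~ in_hyp H x.
Proof.
move=> tail_lt1.
have [x [_ box avoid]] :=
  potential_descent (le_lt_trans (potential0_le_tail (fun=> 1%N)) tail_lt1) (leqnn n).
exists x => [k|H AH xH]; first exact: box.
have [j0 fj0 _] := far AH.
have j0S : j0 \in [set j | fixed H j] by rewrite inE.
case: (arg_maxnP (fun i : 'I_n => nat_of_ord i) j0S) => k kS kmax.
have Smax : is_max [set j | fixed H j] k by apply/andP; split => //; apply/forall_inP.
move/negP: (avoid _ _ Smax (ltn_ord k)); apply.
rewrite /consistent hyp_at_fixed //; apply/forallP => j; apply/implyP => _.
by rewrite /agree; case e: (H j) => [a|] //; rewrite (xH j a e).
Qed.

End FarHyperplanes.
End Potential.

Theorem theorem1p4 (q : nat -> nat)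
  (hq2 : forall k : nat, (1 <= k)%N -> (2 <= q k)%N)
  (hliminf : exists r : rat, 3 < r /\
     exists K : nat, forall k : nat, (K <= k)%N -> r * k%:R <= (q k)%:R) :
  exists C : nat, forall (n : nat) (Acol : ('I_n -> option nat) -> Prop),
    (forall H, Acol H -> hyperplane q H) ->
    (forall x, in_box q x -> exists H, Acol H /\ in_hyp H x) ->
    (exists H1 H2, Acol H1 /\ Acol H2 /\ H1 <> H2 /\ parallel H1 H2) \/
    (exists H, Acol H /\ fixed_within H C).
Proof.
case: hliminf => r [r_gt3 [K q_ge]].
pose th := (r - 3) / (2 * r).
have r_gt0 : 0 < 2 * r by lra.
have th_gt0 : 0 < th by rewrite divr_gt0 //; lra.
have th_lt1 : th < 1 by rewrite ltr_pdivrMr //; lra.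
have th_r : 3 < (1 - th) * r.
  have -> : (1 - th) * r = (r + 3) / 2 by rewrite /th; field; rewrite gt_eqF //; lra.
  lra.
have [C tail_lt1] := tail_term_small_tail th_gt0 th_lt1 th_r q_ge.
(* A hyperplane fixing a value outside [S_k] covers nothing, so the range
   condition [hyperplane q] is not needed. *)
exists C => n A _ cover.
have [|nonpar] := classic (exists H1 H2, A H1 /\ A H2 /\ H1 <> H2 /\ parallel H1 H2).
  by left.
right; apply: NNPP => nofix.
have A_nonparallel H1 H2 : A H1 -> A H2 -> parallel H1 H2 -> H1 = H2.
  by move=> AH1 AH2 par; apply: NNPP => neq; apply: nonpar; exists H1, H2.
have far H : A H -> exists2 j : 'I_n, fixed H j & (C <= j)%N.
  move=> AH; apply: NNPP => near; apply: nofix; exists H; split => // j fj.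
  by rewrite ltnNge; apply/negP => Cj; apply: near; exists j.
have q_gt0 j : (0 < q j.+1)%N by apply: ltnW (hq2 j.+1 isT).
have [x xbox xfree] :=
  uncovered_point q_gt0 th_gt0 th_lt1 A_nonparallel far (tail_lt1 n).
by have [H [AH xH]] := cover x xbox; apply: xfree AH xH.
Qed.
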